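(* For $x\in[0,2^{10})$ write $\lfloor x\rfloor=\sum_{k=0}^{9}2^{9-k}e_k$ with $e_k\in\{0,1\}$ and $x=\lfloor x\rfloor+\sum_{k=0}^{\infty}s^k10^{-k-1}$ with $s^k\in\{0,\dots,9\}$, using the decimal expansion without an infinite tail of $9$'s. Define $g:[0,2^{10})\to[0,2^{10})$ by $$g(x)=\sum_{k=0}^{9}2^{9-k}\big(e_k+\delta(k,s^0)\bmod 2\big)+\sum_{k=0}^{\infty}s^{k+1}10^{-k-1},$$ where $\delta(k,j)=1$ if $k=j$ and $0$ otherwise. Let $I=\{n/10 : n\in\{0,1,\dots,2^{10}\cdot10\}\}$ and, for $x^0\in[0,2^{10})$, let $x^{n+1}=g(x^n)$ for $n\ge 0$. Let $\mathcal{L}=\{x^0\in[0,2^{10}) : x^n\notin I \text{ for all } n\in\mathbb{N}\}$. Then for every $x^0\in\mathcal{L}$, the Lyapunov exponent $$\lambda(x^0)=\lim_{n\to+\infty}\frac{1}{n}\sum_{i=1}^{n}\ln\left|g'(x^{i-1})\right|$$ exists and equals $\ln(10)$. *)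

From Stdlib Require Import Reals ZArith.
From Coquelicot Require Import Coquelicot.
Open Scope R_scope.

(* floor of a real (Int_part x = up x - 1 is the floor) *)
Definition flr (x : R) : Z := Int_part x.

Definition ebit (k : nat) (x : R) : Z :=
  Z.modulo (Z.div (flr x) (2 ^ Z.of_nat (9 - k))) 2.

(* decimal digit s^k of the fractional part: x = floor x + sum_k s^k 10^(-k-1),
   expansion without infinite tail of 9's (the floor-based digits). *)
Definition sdig (k : nat) (x : R) : Z :=
  Z.modulo (flr ((x - IZR (flr x)) * 10 ^ (S k))) 10.

Definition delta (k : nat) (j : Z) : Z := if Z.eqb (Z.of_nat k) j then 1%Z else 0%Z.

Fixpoint sumR (f : nat -> R) (n : nat) : R :=
  match n with O => 0 | S m => sumR f m + f m end.

Definition g (x : R) : R :=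
  sumR (fun k => 2 ^ (9 - k) * IZR (Z.modulo (ebit k x + delta k (sdig 0 x)) 2)) 10
  + Series (fun k => IZR (sdig (S k) x) / 10 ^ (S k)).

Definition inI (x : R) : Prop := exists n : nat, (n <= 10240)%nat /\ x = INR n / 10.

Fixpoint orbit (x0 : R) (n : nat) : R :=
  match n with O => x0 | S m => g (orbit x0 m) end.

Definition inL (x0 : R) : Prop :=
  0 <= x0 < 2 ^ 10 /\ forall n : nat, ~ inI (orbit x0 n).

Definition lyap_avg (x0 : R) (n : nat) : R :=
  / INR n * sumR (fun i => ln (Rabs (Derive g (orbit x0 i)))) n.

(* On every interval (m/10, (m+1)/10) the integer part of x and its first
   decimal digit s^0 are constant, while the shifted decimal series in [g]
   telescopes to 10 frac(x) - s^0.  Hence [g] is affine with slope 10 there.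
   The orbit of a point of L stays in [0, 2^10) and never hits the endpoints
   of these intervals, so g' = 10 along it and every average is ln 10. *)
From Stdlib Require Import Reals Lra Lia ZArith.
From Coquelicot Require Import Coquelicot.
Open Scope R_scope.

Lemma flr_spec x : IZR (flr x) <= x < IZR (flr x) + 1.
Proof. unfold flr; destruct (base_Int_part x); lra. Qed.

Lemma flr_unique z x : IZR z <= x < IZR z + 1 -> flr x = z.
Proof.
  intros H. pose proof (flr_spec x).
  assert (flr x - z = 0)%Z by (apply one_IZR_lt1; rewrite minus_IZR; lra).
  lia.
Qed.

Lemma flr_mul_bounds (b : Z) t :
  (0 < b)%Z -> (0 <= flr (IZR b * t) - b * flr t < b)%Z.
Proof.
  intros Hb. apply IZR_lt in Hb.
  pose proof (flr_spec t) as [H1 H2]. pose proof (flr_spec (IZR b * t)) as [H3 H4].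
  assert (b * flr t < flr (IZR b * t) + 1)%Z.
  { apply lt_IZR. rewrite plus_IZR, mult_IZR. nra. }
  assert (flr (IZR b * t) < b * flr t + b)%Z.
  { apply lt_IZR. rewrite plus_IZR, mult_IZR. nra. }
  lia.
Qed.

(* The integer whose decimal digits are s^0, ..., s^(k-1). *)
Definition dec_prefix (k : nat) (y : R) : Z := flr (frac_part y * 10 ^ k).

Lemma dec_prefix_0 y : dec_prefix 0 y = 0%Z.
Proof. apply flr_unique. pose proof (base_fp y). simpl. lra. Qed.

Lemma dec_prefix_S k y : dec_prefix (S k) y = (10 * dec_prefix k y + sdig k y)%Z.
Proof.
  assert (E : dec_prefix (S k) y = flr (10 * (frac_part y * 10 ^ k))).
  { unfold dec_prefix. f_equal. simpl. ring. }
  pose proof (flr_mul_bounds 10 (frac_part y * 10 ^ k) ltac:(lia)) as Hb.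
  rewrite <- E in Hb. fold (dec_prefix k y) in Hb.
  change (sdig k y) with (dec_prefix (S k) y mod 10)%Z.
  rewrite <- (Z.sub_add (10 * dec_prefix k y) (dec_prefix (S k) y)) at 2.
  rewrite Z.mul_comm, Z.mod_add, Z.mod_small; lia.
Qed.

Lemma sdig_0 y : sdig 0 y = dec_prefix 1 y.
Proof. rewrite dec_prefix_S, dec_prefix_0. lia. Qed.

Lemma decimal_tail_partial_sum y N :
  sum_n (fun k => IZR (sdig (S k) y) / 10 ^ (S k)) N
  = IZR (dec_prefix (S (S N)) y) / 10 ^ (S N) - IZR (dec_prefix 1 y).
Proof.
  induction N as [|N IH].
  - rewrite sum_O, (dec_prefix_S 1), plus_IZR, mult_IZR. simpl. field.
  - rewrite sum_Sn, IH, (dec_prefix_S (S (S N))), plus_IZR, mult_IZR.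
    unfold plus; simpl. field; repeat split; apply pow_nonzero; lra.
Qed.

Lemma dec_prefix_approx y n :
  10 * frac_part y - (/ 10) ^ n <= IZR (dec_prefix (S n) y) / 10 ^ n <= 10 * frac_part y.
Proof.
  pose proof (flr_spec (frac_part y * 10 ^ S n)) as [H1 H2].
  fold (dec_prefix (S n) y) in H1, H2.
  assert (P : 0 < 10 ^ n) by (apply pow_lt; lra).
  replace (10 ^ S n) with (10 * 10 ^ n) in H1, H2 by (simpl; ring).
  assert (Pinv : 0 <= / 10 ^ n) by (apply Rlt_le, Rinv_0_lt_compat, P).
  rewrite pow_inv. split.
  - replace (10 * frac_part y - / 10 ^ n)
      with ((frac_part y * (10 * 10 ^ n) - 1) / 10 ^ n) by (field; lra).
    apply Rmult_le_compat_r; lra.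
  - replace (10 * frac_part y) with (frac_part y * (10 * 10 ^ n) / 10 ^ n) by (field; lra).
    apply Rmult_le_compat_r; lra.
Qed.

Lemma decimal_tail_series y :
  Series (fun k => IZR (sdig (S k) y) / 10 ^ (S k)) = 10 * frac_part y - IZR (sdig 0 y).
Proof.
  rewrite sdig_0. apply is_series_unique.
  change (is_lim_seq (sum_n (fun k => IZR (sdig (S k) y) / 10 ^ (S k)))
            (10 * frac_part y - IZR (dec_prefix 1 y))).
  apply (is_lim_seq_ext (fun N => IZR (dec_prefix (S (S N)) y) / 10 ^ (S N) - IZR (dec_prefix 1 y))).
  { intros N. symmetry. apply decimal_tail_partial_sum. }
  apply (is_lim_seq_minus' _ (fun _ => IZR (dec_prefix 1 y))); [|apply is_lim_seq_const].
  assert (G : is_lim_seq (fun n => 10 * frac_part y - (/ 10) ^ S n) (10 * frac_part y)).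
  { assert (Geom : is_lim_seq (fun n => (/ 10) ^ S n) 0).
    { apply (is_lim_seq_incr_1 (fun n => (/ 10) ^ n)), is_lim_seq_geom.
      rewrite Rabs_pos_eq; [|apply Rlt_le, Rinv_0_lt_compat; lra].
      apply (Rmult_lt_reg_l 10); [lra|]. rewrite Rinv_r; lra. }
    pose proof (is_lim_seq_minus' _ _ _ _ (is_lim_seq_const (10 * frac_part y)) Geom) as L.
    rewrite Rminus_0_r in L. exact L. }
  apply (is_lim_seq_le_le _ _ (fun _ => 10 * frac_part y) _ (fun N => dec_prefix_approx y (S N)) G).
  apply is_lim_seq_const.
Qed.

(* The binary part of [g], as a function of the floor [a] and the digit [s] = s^0. *)
Definition flip_bits (a s : Z) : R :=
  sumR (fun k => 2 ^ (9 - k)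
    * IZR (((a / 2 ^ Z.of_nat (9 - k)) mod 2 + delta k s) mod 2)) 10.

Lemma g_split y : g y = flip_bits (flr y) (sdig 0 y) + (10 * frac_part y - IZR (sdig 0 y)).
Proof. unfold g. rewrite decimal_tail_series. reflexivity. Qed.

Lemma flip_bits_bounds a s : 0 <= flip_bits a s <= 2 ^ 10 - 1.
Proof.
  assert (Hbit : forall z, 0 <= IZR (z mod 2) <= 1).
  { intros z. pose proof (Z.mod_pos_bound z 2 ltac:(lia)).
    split; apply IZR_le; lia. }
  unfold flip_bits. simpl.
  repeat match goal with |- context [IZR (?z mod 2)] =>
    let h := fresh in pose proof (Hbit z) as h; set (IZR (z mod 2)) in * end.
  lra.
Qed.

Lemma g_bounds y : 0 <= g y < 2 ^ 10.
Proof.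
  rewrite g_split, sdig_0. pose proof (flip_bits_bounds (flr y) (dec_prefix 1 y)).
  pose proof (flr_spec (frac_part y * 10 ^ 1)) as Hf. fold (dec_prefix 1 y) in Hf.
  replace (frac_part y * 10 ^ 1) with (10 * frac_part y) in Hf by (simpl; ring).
  lra.
Qed.

Lemma orbit_bounds x0 n : 0 <= x0 < 2 ^ 10 -> 0 <= orbit x0 n < 2 ^ 10.
Proof. intros H. destruct n; [exact H | apply g_bounds]. Qed.

Section OpenTenth.

Variable m : Z.

Definition in_tenth (y : R) : Prop := IZR m < 10 * y < IZR m + 1.

Lemma in_tenth_digits y :
  in_tenth y -> flr y = (m / 10)%Z /\ sdig 0 y = (m mod 10)%Z.
Proof.
  intros Hy.
  assert (Fy10 : flr (10 * y) = m) by (apply flr_unique; unfold in_tenth in Hy; lra).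
  pose proof (flr_mul_bounds 10 y ltac:(lia)) as Hb. rewrite Fy10 in Hb.
  assert (Fy : flr y = (m / 10)%Z).
  { apply Z.div_unique_pos with (m - 10 * flr y)%Z; lia. }
  split; [exact Fy|].
  rewrite sdig_0. unfold dec_prefix, frac_part. fold (flr y). rewrite Fy.
  assert (Hm : IZR m = 10 * IZR (m / 10) + IZR (m mod 10)).
  { rewrite <- mult_IZR, <- plus_IZR, <- Z.div_mod by lia. reflexivity. }
  apply flr_unique. unfold in_tenth in Hy. simpl. lra.
Qed.

Lemma g_affine_on_tenth x y :
  in_tenth x -> in_tenth y -> g y = g x + 10 * (y - x).
Proof.
  intros Hx Hy.
  destruct (in_tenth_digits x Hx) as [Fx Sx], (in_tenth_digits y Hy) as [Fy Sy].
  rewrite !g_split. unfold frac_part. fold (flr x) (flr y).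
  rewrite Fx, Sx, Fy, Sy. ring.
Qed.

Lemma is_derive_g_on_tenth x : in_tenth x -> is_derive g x 10.
Proof.
  intros Hx.
  apply (is_derive_ext_loc (fun y => g x + 10 * (y - x))).
  - apply (locally_interval _ x (IZR m / 10) ((IZR m + 1) / 10));
      unfold in_tenth in Hx; simpl; try lra.
    intros y Hy1 Hy2. symmetry. apply g_affine_on_tenth; [exact Hx|].
    unfold in_tenth. lra.
  - auto_derive; [exact I | ring].
Qed.

End OpenTenth.

Lemma in_tenth_flr x : 0 <= x < 2 ^ 10 -> ~ inI x -> in_tenth (flr (10 * x)) x.
Proof.
  intros Hx HI. pose proof (flr_spec (10 * x)) as [[Hlt|Heq] H2]; [split; lra|].
  exfalso. apply HI.
  assert (Hb : (0 <= flr (10 * x) <= 10240)%Z).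
  { simpl in Hx. split; apply le_IZR; simpl; lra. }
  exists (Z.to_nat (flr (10 * x))). split.
  { change 10240%nat with (Z.to_nat 10240). apply Z2Nat.inj_le; lia. }
  rewrite INR_IZR_INZ, Z2Nat.id, Heq by lia. field.
Qed.

Lemma is_derive_g_orbit x0 n : inL x0 -> is_derive g (orbit x0 n) 10.
Proof.
  intros [Hx0 HI].
  apply (is_derive_g_on_tenth (flr (10 * orbit x0 n))), in_tenth_flr; [|apply HI].
  apply orbit_bounds, Hx0.
Qed.

Lemma sumR_ext f h n : (forall i, f i = h i) -> sumR f n = sumR h n.
Proof. intros E. induction n as [|n IH]; simpl; [reflexivity | rewrite IH, E; reflexivity]. Qed.

Lemma sumR_const c n : sumR (fun _ => c) n = INR n * c.
Proof. induction n as [|n IH]; simpl sumR; [simpl; ring | rewrite IH, S_INR; ring]. Qed.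

Lemma lyap_avg_S x0 n : inL x0 -> lyap_avg x0 (S n) = ln 10.
Proof.
  intros HL. unfold lyap_avg.
  rewrite (sumR_ext _ (fun _ => ln 10)), sumR_const.
  - field. apply not_0_INR. lia.
  - intros i. rewrite (is_derive_unique _ _ 10 (is_derive_g_orbit x0 i HL)).
    rewrite Rabs_pos_eq by lra. reflexivity.
Qed.

Theorem mainTheorem3 (x0 : R) (hx0 : inL x0) :
  (forall n : nat, ex_derive g (orbit x0 n)) /\
  is_lim_seq (lyap_avg x0) (ln 10).
Proof.
  split.
  - intros n. exists 10. apply is_derive_g_orbit, hx0.
  - apply is_lim_seq_incr_1.
    apply (is_lim_seq_ext (fun _ => ln 10)); [|apply is_lim_seq_const].
    intros n. symmetry. apply lyap_avg_S, hx0.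
Qed.
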